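(* Let $\mathcal{AP}=\langle \Pi, E, \mathit{Hyp}, \mathit{Obs}\rangle$ be a Datalog abduction problem with $E\cap\mathit{Hyp}=\emptyset$. Define the instance $D=D^x\cup D^n$ with exogenous tuples $D^x:=E$ and endogenous tuples $D^n:=\mathit{Hyp}$, and the boolean Datalog query $\Pi':=\Pi\cup\{\mathit{ans}\leftarrow \mathit{Obs}\}$, where $\mathit{ans}$ is a fresh propositional atom. Then a hypothesis $h$ is relevant for $\mathcal{AP}$ (i.e. $h\in\mathit{Rel}(\mathcal{AP})$) if and only if $h$ is an actual cause for $\mathit{ans}$ with respect to $\Pi'$ and $D$.
   Context: A Datalog abduction problem $\langle\Pi,E,\mathit{Hyp},\mathit{Obs}\rangle$ consists of a finite set $\Pi$ of positive Datalog rules, a finite set $E$ of ground atoms whose predicates do not occur in rule heads, a finite set $\mathit{Hyp}$ of ground atoms (hypotheses) whose predicates do not occur in rule heads, and a finite conjunction $\mathit{Obs}$ of ground atoms, with $\Pi\cup E\cup\mathit{Hyp}\models\mathit{Obs}$ ($\models$ meaning membership in the minimal model). An abductive diagnosis is a subset-minimal $\Delta\subseteq\mathit{Hyp}$ with $\Pi\cup E\cup\Delta\models\mathit{Obs}$; $\mathit{Rel}(\mathcal{AP})$ is the set of hypotheses in some abductive diagnosis. A tuple $\tau\in D^n$ is an actual cause for $\mathit{ans}$ w.r.t. $\Pi'$ and $D$ if there is $\Gamma\subseteq D^n$ with $\Pi'\cup(D\smallsetminus\Gamma)\models\mathit{ans}$ and $\Pi'\cup(D\smallsetminus(\Gamma\cup\{\tau\}))\not\models\mathit{ans}$.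 *)

From Stdlib Require Import List.
Import ListNotations.

Definition pred := nat.
Definition const := nat.
Definition var := nat.

Inductive term : Type := TVar (v : var) | TConst (c : const).

Definition atom : Type := (pred * list term)%type.
Definition gatom : Type := (pred * list const)%type.

Definition rule : Type := (atom * list atom)%type.
Definition program := list rule.

Definition subst := var -> const.

Definition inst_term (s : subst) (t : term) : const :=
  match t with TVar v => s v | TConst c => c end.

Definition inst (s : subst) (a : atom) : gatom :=
  (fst a, map (inst_term s) (snd a)).

Definition term_vars (t : term) : list var :=
  match t with TVar v => [v] | TConst _ => [] end.

Definition atom_vars (a : atom) : list var := flat_map term_vars (snd a).

Definition safe_rule (r : rule) : Prop :=
  forall v, In v (atom_vars (fst r)) -> exists b, In b (snd r) /\ In v (atom_vars b).

Definition safe_program (P : program) : Prop := forall r, In r P -> safe_rule r.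

(* Membership in the minimal model of P ∪ F, F a set of ground facts:
   least set containing F and closed under all ground instances of rules. *)
Inductive derives (P : program) (F : gatom -> Prop) : gatom -> Prop :=
| der_fact : forall a, F a -> derives P F a
| der_rule : forall (r : rule) (s : subst),
    In r P ->
    (forall b, In b (snd r) -> derives P F (inst s b)) ->
    derives P F (inst s (fst r)).

Definition entails_all (P : program) (F : gatom -> Prop) (Obs : list gatom) : Prop :=
  forall o, In o Obs -> derives P F o.

Definition set_of (l : list gatom) : gatom -> Prop := fun a => In a l.
Definition setU (A B : gatom -> Prop) : gatom -> Prop := fun a => A a \/ B a.
Definition setD (A B : gatom -> Prop) : gatom -> Prop := fun a => A a /\ ~ B a.
Definition subset (A B : gatom -> Prop) : Prop := forall a, A a -> B a.

Definition head_preds (P : program) : list pred := map (fun r => fst (fst r)) P.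

Record abduction_problem (Pi : program) (E Hyp Obs : list gatom) : Prop := {
  ap_safe : safe_program Pi;
  ap_E_edb : forall a, In a E -> ~ In (fst a) (head_preds Pi);
  ap_Hyp_edb : forall a, In a Hyp -> ~ In (fst a) (head_preds Pi);
  ap_expl : entails_all Pi (setU (set_of E) (set_of Hyp)) Obs
}.

Definition abductive_diagnosis (Pi : program) (E Hyp Obs : list gatom)
  (Delta : gatom -> Prop) : Prop :=
  subset Delta (set_of Hyp) /\
  entails_all Pi (setU (set_of E) Delta) Obs /\
  (forall Delta', subset Delta' Delta -> ~ subset Delta Delta' ->
     ~ entails_all Pi (setU (set_of E) Delta') Obs).

Definition relevant (Pi : program) (E Hyp Obs : list gatom) (h : gatom) : Prop :=
  exists Delta, abductive_diagnosis Pi E Hyp Obs Delta /\ Delta h.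

Definition actual_cause (P : program) (Dx Dn : gatom -> Prop) (ans : gatom)
  (tau : gatom) : Prop :=
  Dn tau /\
  exists Gamma, subset Gamma Dn /\
    derives P (setD (setU Dx Dn) Gamma) ans /\
    ~ derives P (setD (setU Dx Dn) (setU Gamma (fun a => a = tau))) ans.

Definition const_atom (g : gatom) : atom := (fst g, map TConst (snd g)).

Definition query_program (Pi : program) (ans : pred) (Obs : list gatom) : program :=
  Pi ++ [((ans, []), map const_atom Obs)].

Definition atom_preds_rule (r : rule) : list pred := fst (fst r) :: map fst (snd r).
Definition program_preds (P : program) : list pred := flat_map atom_preds_rule P.

Definition fresh_pred (ans : pred) (Pi : program) (E Hyp Obs : list gatom) : Prop :=
  ~ In ans (program_preds Pi) /\ ~ In ans (map fst E) /\
  ~ In ans (map fst Hyp) /\ ~ In ans (map fst Obs).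

(* Since ans is fresh and only derivable through the rule ans <- Obs, the
   query Pi' ∪ (D \ Gamma) derives ans iff Pi ∪ E ∪ (Hyp \ Gamma) entails Obs.
   Actual causes thus become the hypotheses h with some contingency Gamma ⊆ Hyp
   such that Hyp \ Gamma explains Obs but Hyp \ (Gamma ∪ {h}) does not. For a
   monotone property of subsets of a finite set, these are exactly the elements
   of some minimal subset with the property: a minimal explanation Delta
   containing h gives Gamma := Hyp \ Delta, and conversely any minimal
   explanation inside Hyp \ Gamma must contain h. *)

From Stdlib Require Import List Classical Arith.
Import ListNotations.

Definition gatom_eq_dec : forall x y : gatom, {x = y} + {x <> y}.
Proof. decide equality; [apply (list_eq_dec Nat.eq_dec) | apply Nat.eq_dec]. Defined.

Lemma exists_list_filter (Q : gatom -> Prop) (L : list gatom) :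
  exists l, forall a, In a l <-> In a L /\ Q a.
Proof.
  induction L as [|x L [l Hl]].
  - exists []; simpl; tauto.
  - destruct (classic (Q x)) as [Qx | nQx].
    + exists (x :: l); intro a; simpl; rewrite Hl.
      split; [intros [<- | ?] | intros [[<- | ?] ?]]; tauto.
    + exists l; intro a; simpl; rewrite Hl; split; [tauto | intros [[<- | ?] ?]; tauto].
Qed.

Section MinimalSubsets.

Variable Q : (gatom -> Prop) -> Prop.
Hypothesis Q_mono : forall X Y, subset X Y -> Q X -> Q Y.

Definition minimal_subset (Delta : gatom -> Prop) : Prop :=
  Q Delta /\ (forall Delta', subset Delta' Delta -> ~ subset Delta Delta' -> ~ Q Delta').

Lemma minimal_subset_exists (l : list gatom) :
  Q (set_of l) -> exists Delta, subset Delta (set_of l) /\ minimal_subset Delta.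
Proof.
  remember (length l) as n eqn:Hn; revert l Hn.
  induction n as [n IHn] using lt_wf_ind; intros l -> Ql.
  destruct (classic (exists a, In a l /\ Q (set_of (remove gatom_eq_dec a l))))
    as [[a [Ha Qa]] | Hmin].
  - destruct (IHn _ (remove_length_lt gatom_eq_dec l a Ha) _ eq_refl Qa)
      as [Delta [Hsub HDelta]].
    exists Delta; split; [|exact HDelta].
    intros x Hx; exact (proj1 (in_remove gatom_eq_dec l x a (Hsub x Hx))).
  - exists (set_of l); split; [intros x Hx; exact Hx | split; [exact Ql |]].
    intros D' HD' Hnot QD'; apply Hnot; intros a Ha.
    apply NNPP; intro nD'a; apply Hmin; exists a; split; [exact Ha |].
    apply (Q_mono D'); [| exact QD'].
    intros x Hx; apply in_in_remove; [intros ->; contradiction | exact (HD' x Hx)].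
Qed.

Variables (U : gatom -> Prop) (h : gatom).

Definition counterfactual_contingency (Gamma : gatom -> Prop) : Prop :=
  subset Gamma U /\ Q (setD U Gamma) /\ ~ Q (setD U (setU Gamma (fun a => a = h))).

Lemma contingency_of_minimal_subset (Delta : gatom -> Prop) :
  subset Delta U -> minimal_subset Delta -> Delta h ->
  counterfactual_contingency (setD U Delta).
Proof.
  intros HDU [QDelta HDmin] Dh.
  split; [intros a [Ua _]; exact Ua | split].
  - apply (Q_mono Delta); [| exact QDelta].
    intros a Da; split; [exact (HDU a Da) | intros [_ nDa]; contradiction].
  - intro Qh; apply (HDmin (fun a => Delta a /\ a <> h)).
    + intros a [Da _]; exact Da.
    + intro Hsub; exact (proj2 (Hsub h Dh) eq_refl).
    + apply (Q_mono (setD U (setU (setD U Delta) (fun a => a = h)))); [| exact Qh].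
      intros a [Ua Hn]; split.
      * apply NNPP; intro nDa; apply Hn; left; split; assumption.
      * intros ->; apply Hn; right; reflexivity.
Qed.

Lemma minimal_subset_of_contingency (L : list gatom) (Gamma : gatom -> Prop) :
  U = set_of L -> counterfactual_contingency Gamma ->
  exists Delta, subset Delta U /\ minimal_subset Delta /\ Delta h.
Proof.
  intros HUL [HGU [QG nQGh]]; rewrite HUL in *.
  destruct (exists_list_filter (fun a => ~ Gamma a) L) as [l Hl].
  destruct (minimal_subset_exists l) as [Delta [Hsub HDelta]].
  { apply (Q_mono (setD (set_of L) Gamma)); [| exact QG].
    intros a Ha; apply Hl; exact Ha. }
  assert (HDG : subset Delta (setD (set_of L) Gamma)) by (intros a Da; apply Hl, Hsub, Da).
  exists Delta; split; [intros a Da; exact (proj1 (HDG a Da)) | split; [exact HDelta |]].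
  apply NNPP; intro nDh; apply nQGh.
  apply (Q_mono Delta); [| exact (proj1 HDelta)].
  intros a Da; split; [exact (proj1 (HDG a Da)) |].
  intros [Ga | ->]; [exact (proj2 (HDG a Da) Ga) | contradiction].
Qed.

End MinimalSubsets.

Lemma derives_mono (P : program) (F G : gatom -> Prop) (a : gatom) :
  subset F G -> derives P F a -> derives P G a.
Proof.
  intros HFG H; induction H.
  - apply der_fact; auto.
  - apply der_rule; auto.
Qed.

Lemma entails_all_mono (P : program) (F G : gatom -> Prop) (Obs : list gatom) :
  subset F G -> entails_all P F Obs -> entails_all P G Obs.
Proof. intros HFG H o Ho; exact (derives_mono _ _ _ _ HFG (H o Ho)). Qed.

Lemma derives_app_l (P P' : program) (F : gatom -> Prop) (a : gatom) :
  derives P F a -> derives (P ++ P') F a.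
Proof.
  intro H; induction H; [apply der_fact; auto |].
  apply der_rule; auto; apply in_or_app; auto.
Qed.

Lemma entails_all_setD_setU (P : program) (X Y G : gatom -> Prop) (Obs : list gatom) :
  (forall a, X a -> ~ G a) ->
  (entails_all P (setD (setU X Y) G) Obs <-> entails_all P (setU X (setD Y G)) Obs).
Proof.
  intro HXG; split; apply entails_all_mono.
  - intros a [[Xa | Ya] nGa]; [left | right; split]; assumption.
  - intros a [Xa | [Ya nGa]]; split; [left | apply HXG | right |]; assumption.
Qed.

Lemma inst_const_atom (s : subst) (g : gatom) : inst s (const_atom g) = g.
Proof.
  destruct g as [p l]; unfold inst, const_atom; simpl; f_equal.
  rewrite map_map; apply map_id.
Qed.

Lemma program_preds_head (P : program) (r : rule) :
  In r P -> In (fst (fst r)) (program_preds P).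
Proof. intro Hr; apply in_flat_map; exists r; split; [exact Hr | left; reflexivity]. Qed.

Lemma program_preds_body (P : program) (r : rule) (b : atom) :
  In r P -> In b (snd r) -> In (fst b) (program_preds P).
Proof.
  intros Hr Hb; apply in_flat_map; exists r; split; [exact Hr |].
  right; apply in_map; exact Hb.
Qed.

Section QueryProgram.

Variables (Pi : program) (ans : pred) (Obs : list gatom) (F : gatom -> Prop).
Hypothesis ans_fresh_Pi : ~ In ans (program_preds Pi).
Hypothesis ans_fresh_Obs : ~ In ans (map fst Obs).
Hypothesis ans_fresh_F : forall a, F a -> fst a <> ans.

Lemma derives_query_program_fresh (a : gatom) :
  derives (query_program Pi ans Obs) F a -> fst a <> ans -> derives Pi F a.
Proof.
  induction 1 as [a Fa | r s Hr Hbody IH]; intro Ha; [apply der_fact; exact Fa |].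
  apply in_app_or in Hr as [Hr | [Hq | []]]; [| subst r; contradiction].
  apply der_rule; [exact Hr |].
  intros b Hb; apply IH; [exact Hb |].
  intro E; apply ans_fresh_Pi; rewrite <- E; exact (program_preds_body _ _ _ Hr Hb).
Qed.

Lemma derives_query_program_ans :
  derives (query_program Pi ans Obs) F (ans, []) <-> entails_all Pi F Obs.
Proof.
  split.
  - intro H; remember (ans, @nil const) as g eqn:Hg.
    destruct H as [g Fg | r s Hr Hbody]; apply (f_equal fst) in Hg; simpl in Hg.
    + exact (False_ind _ (ans_fresh_F g Fg Hg)).
    + apply in_app_or in Hr as [Hr | [Hq | []]]; [| subst r].
      * exfalso; apply ans_fresh_Pi; rewrite <- Hg; exact (program_preds_head _ _ Hr).
      * intros o Ho; apply derives_query_program_fresh.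
        -- rewrite <- (inst_const_atom s o); apply Hbody, in_map, Ho.
        -- intro E; apply ans_fresh_Obs; rewrite <- E; apply in_map, Ho.
  - intro H.
    change (ans, @nil const) with (inst (fun _ => 0) (ans, @nil term)).
    apply der_rule with (r := ((ans, []), map const_atom Obs)).
    + apply in_or_app; right; left; reflexivity.
    + intros b Hb; apply in_map_iff in Hb as [o [<- Ho]].
      rewrite inst_const_atom; apply derives_app_l, H, Ho.
Qed.

End QueryProgram.

Lemma actual_cause_query_program (Pi : program) (E Hyp Obs : list gatom) (ans : pred)
    (h : gatom) :
  (forall a, In a E -> ~ In a Hyp) ->
  fresh_pred ans Pi E Hyp Obs ->
  (actual_cause (query_program Pi ans Obs) (set_of E) (set_of Hyp) (ans, nil) h <->
   set_of Hyp h /\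
   exists Gamma, counterfactual_contingency
     (fun D => entails_all Pi (setU (set_of E) D) Obs) (set_of Hyp) h Gamma).
Proof.
  intros Hdisj [FPi [FE [FHyp FObs]]].
  assert (ans_iff : forall G, subset G (set_of Hyp) ->
    derives (query_program Pi ans Obs) (setD (setU (set_of E) (set_of Hyp)) G) (ans, []) <->
    entails_all Pi (setU (set_of E) (setD (set_of Hyp) G)) Obs).
  { intros G HG.
    assert (FD : forall a, setD (setU (set_of E) (set_of Hyp)) G a -> fst a <> ans).
    { intros a [[Ea | Ha] _] Hans; [apply FE | apply FHyp];
        rewrite <- Hans; apply in_map; assumption. }
    rewrite derives_query_program_ans by assumption.
    apply entails_all_setD_setU; intros a Ea Ga; exact (Hdisj a Ea (HG a Ga)). }
  split; intros [Hh [Gamma [HG [Hd Hnd]]]];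
    split; try exact Hh; exists Gamma; split; try exact HG;
    assert (HGh : subset (setU Gamma (fun a => a = h)) (set_of Hyp))
      by (intros a [Ga | ->]; [exact (HG a Ga) | exact Hh]).
  - rewrite <- (ans_iff _ HG), <- (ans_iff _ HGh); split; assumption.
  - rewrite (ans_iff _ HG), (ans_iff _ HGh); split; assumption.
Qed.

Theorem proposition4 (Pi : program) (E Hyp Obs : list gatom) (ans : pred) (h : gatom) :
  abduction_problem Pi E Hyp Obs ->
  (forall a, In a E -> ~ In a Hyp) ->
  fresh_pred ans Pi E Hyp Obs ->
  (relevant Pi E Hyp Obs h <->
   actual_cause (query_program Pi ans Obs) (set_of E) (set_of Hyp) (ans, nil) h).
Proof.
  intros _ Hdisj Hfresh.
  set (explains := fun D => entails_all Pi (setU (set_of E) D) Obs).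
  assert (explains_mono : forall X Y, subset X Y -> explains X -> explains Y).
  { intros X Y HXY; apply entails_all_mono.
    intros a [Ea | Xa]; [left | right; apply HXY]; assumption. }
  rewrite actual_cause_query_program by assumption.
  split.
  - intros [Delta [[HDsub HDelta] Dh]].
    split; [exact (HDsub h Dh) |].
    exists (setD (set_of Hyp) Delta).
    exact (contingency_of_minimal_subset explains explains_mono _ h Delta HDsub HDelta Dh).
  - intros [_ [Gamma HGamma]].
    destruct (minimal_subset_of_contingency explains explains_mono _ h Hyp Gamma eq_refl HGamma)
      as [Delta [HDsub [HDelta Dh]]].
    exists Delta; split; [split; [exact HDsub | exact HDelta] | exact Dh].
Qed.
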